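(* Consider a two-player perfect-information game of depth $D$, together with approximate bounds $V^{\mathrm{grim}},V^{\mathrm{alt}}$ satisfying $V^{\mathrm{alt}}(s)\ge V^{\mathrm{grim}}(s)$ for all $s$, and approximate learned EPFs $\{\tilde U_s\}$ with induced strategy $\tilde\pi$, all as in the context. Suppose $L_\infty(\tilde U_s,\tilde U^{\mathrm{target}}_s)\le\epsilon$ for all $s\in\mathcal S$. Then $|R_1(\tilde\pi)-\widetilde{\mathsf{OPT}}_2|=\mathcal O(D\epsilon)$, where $\widetilde{\mathsf{OPT}}_2=\max_{\mu_2}\tilde U_{\mathrm{root}}(\mu_2)$. That is, the difference is at most $CD\epsilon$ for an absolute constant $C$.
   Context: A two-player perfect-information game is a finite rooted tree with states $\mathcal S$. Its leaves $\mathcal L$ carry payoffs $r_1(\ell),r_2(\ell)$ for the leader $\mathsf P_1$ and the follower $\mathsf P_2$. Non-leaf states are partitioned into leader states $\mathcal S_1$ and follower states $\mathcal S_2$, and $\mathcal C(s)$ denotes the children of $s$. The depth $D$ is the maximum number of edges on a root-to-leaf path. Approximate bounds: - Let $\tilde\pi_1^{\mathrm{grim}}$ be any fixed leader strategy (an approximate grim strategy). Let $V^{\mathrm{grim}}(s)$ be the follower's expected payoff from $s$ when the follower best responds to $\tilde\pi_1^{\mathrm{grim}}$ in the subgame rooted at $s$. - Let $\tilde\pi^{\mathrm{alt}}$ be any fixed joint strategy (an approximate joint altruistic strategy), and let $V^{\mathrm{alt}}(s)$ be the follower's expected payoff from $s$ under it. For leaves, both quantities equal $r_2(\ell)$. -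 For $s\in\mathcal S_2$ and $s'\in\mathcal C(s)$, let $\tilde\tau(s')=\max_{s^!\in\mathcal C(s),s^!\ne s'}V^{\mathrm{grim}}(s^!)$. Let $\tilde\beta(s')=\tilde\tau(s')$ if the parent of $s'$ is in $\mathcal S_2$, and $-\infty$ if it is in $\mathcal S_1$. Operators, for $g:\mathbb R\to\mathbb R\cup\{-\infty\}$: - $\bigwedge_i g_i$ is the upper concave envelope, the pointwise infimum of all concave $h\ge\max_i g_i$; - $[g\triangleright t](\mu)=g(\mu)$ if $\mu\ge t$ and $-\infty$ otherwise. Learned EPFs: for a leaf, $\tilde U_\ell(\mu)=r_1(\ell)$ if $\mu=r_2(\ell)$ and $-\infty$ otherwise. For each non-leaf $s$, $\tilde U_s$ is piecewise linear, the linear interpolation of finitely many points with $x$-coordinates in $[V^{\mathrm{grim}}(s),V^{\mathrm{alt}}(s)]$ including both endpoints. It is real-valued there and $-\infty$ outside. The target is $\tilde U^{\mathrm{target}}_s=\bigwedge_{s'\in\mathcal C(s)}(\tilde U_{s'}\triangleright\tilde\beta(s'))$ for non-leaf $s$, and $\tilde U_\ell$ for leaves. The loss is $L_\infty(f,g)=\sup_\mu|f(\mu)-g(\mu)|$, with $|(-\infty)-(-\infty)|=0$. Induced strategy $\tilde\pi$: start at the root with promise $\mu_{\mathrm{root}}\in\arg\max\tilde U_{\mathrm{root}}$. At a non-leaf $s$ with promise $\mu$, pick a maximizer $(s',s'',t,\mu',\mu'')$, over $s',s''\in\mathcal C(s)$, $t\in[0,1]$ with $t\mu'+(1-t)\mu''=\mu$,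 of $t[\tilde U_{s'}\triangleright\tilde\beta(s')](\mu')+(1-t)[\tilde U_{s''}\triangleright\tilde\beta(s'')](\mu'')$. Move to $s'$ with probability $t$ and promise $\mu'$, and to $s''$ with probability $1-t$ and promise $\mu''$. The follower follows recommendations at its states. $R_1(\tilde\pi)$ is the leader's resulting expected payoff. *)

From HB Require Import structures.
From mathcomp Require Import all_boot all_order all_algebra.
From mathcomp Require Import boolp classical_sets reals ereal.
Unset Printing Implicit Defensive.
Import Order.TTheory GRing.Theory Num.Theory.
Local Open Scope ring_scope.
Local Open Scope classical_set_scope.

(* Finite rooted game trees.  A leaf carries (r1, r2).  A non-leaf node     *)
(* carries its owner ([leader = true] : state in S_1, leader P_1;           *)
(* [leader = false] : state in S_2, follower P_2) and its n.+1 children,    *)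
(* indexed by 'I_n.+1.  A state is identified by its path from the root    *)
(* (the sequence of child indices), so distinct states are distinct paths. *)
Inductive game (R : Type) : Type :=
| Leaf of R & R
| Node (leader : bool) (n : nat) of ('I_n.+1 -> game R).
Arguments Leaf {R}.
Arguments Node {R}.

Fixpoint sub {R : Type} (g : game R) (p : seq nat) : option (game R) :=
  match p with
  | [::] => Some g
  | i :: p' =>
    match g with
    | Leaf _ _ => None
    | Node _ n ch => if (i < n.+1)%N then sub (ch (inord i)) p' else None
    end
  end.

Fixpoint depth {R : Type} (g : game R) : nat :=
  match g with
  | Leaf _ _ => 0
  | Node _ n ch => (\max_(i < n.+1) depth (ch i)).+1
  end.

Section Defs.
Variable R : realType.
Local Open Scope ereal_scope.

(* V^grim(s): follower's payoff when best responding to the fixed (mixed,  *)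
(* behavioural) leader strategy [pi1 : path -> child index -> probability]. *)
Fixpoint vgrim (pi1 : seq nat -> nat -> R) (g : game R) (p : seq nat) : R :=
  match g with
  | Leaf _ r2 => r2
  | Node leader n ch =>
    if leader then (\sum_(i < n.+1) pi1 p i * vgrim pi1 (ch i) (rcons p i))%R
    else \big[Num.max/vgrim pi1 (ch ord0) (rcons p 0%N)]_(i < n.+1)
            vgrim pi1 (ch i) (rcons p i)
  end.

(* V^alt(s): follower's expected payoff under the fixed joint strategy. *)
Fixpoint valt (pia : seq nat -> nat -> R) (g : game R) (p : seq nat) : R :=
  match g with
  | Leaf _ r2 => r2
  | Node _ n ch => (\sum_(i < n.+1) pia p i * valt pia (ch i) (rcons p i))%R
  end.

Definition is_strategy (only_leader : bool) (pi : seq nat -> nat -> R)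
  (g : game R) : Prop :=
  forall p l n ch, sub g p = Some (Node l n ch) -> (only_leader ==> l) ->
    (forall i : 'I_n.+1, (0 <= pi p i)%R) /\ (\sum_(i < n.+1) pi p i)%R = 1%R.

Definition leaf_epf (r1 r2 : R) : R -> \bar R :=
  fun mu => if mu == r2 then r1%:E else -oo.

Definition epf (U : seq nat -> R -> \bar R) (g : game R) (p : seq nat)
  : R -> \bar R :=
  match g with
  | Leaf r1 r2 => leaf_epf r1 r2
  | Node _ _ _ => U p
  end.

Definition pl_interp (f : R -> \bar R) (a b : R) : Prop :=
  exists (m : nat) (x y : nat -> R),
    [/\ x 0%N = a, x m = b,
        (forall i, (i < m)%N -> (x i < x i.+1)%R),
        f a = (y 0%N)%:E &
      [/\
        (forall i mu, (i < m)%N -> (x i <= mu <= x i.+1)%R ->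
           f mu = (y i + (mu - x i) * (y i.+1 - y i) / (x i.+1 - x i))%:E)
      & (forall mu, ~ (a <= mu <= b)%R -> f mu = -oo)]].

(* Concavity of an extended-real valued function: convex hypograph. *)
Definition concave_e (h : R -> \bar R) : Prop :=
  forall (x y a b t : R), (0 <= t <= 1)%R ->
    a%:E <= h x -> b%:E <= h y ->
    (t * a + (1 - t) * b)%:E <= h (t * x + (1 - t) * y)%R.

Definition envelope (n : nat) (G : 'I_n.+1 -> R -> \bar R) : R -> \bar R :=
  fun mu => ereal_inf [set h mu | h in
    [set h : R -> \bar R | concave_e h /\
       forall x, \big[Order.max/-oo]_(i < n.+1) G i x <= h x]].

Definition restrict (f : R -> \bar R) (t : \bar R) : R -> \bar R :=
  fun mu => if t <= mu%:E then f mu else -oo.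

(* L_infty distance, with |(-oo) - (-oo)| = 0. *)
Definition Linf (f g : R -> \bar R) : \bar R :=
  ereal_sup [set (if (f mu == -oo) && (g mu == -oo) then 0 else `|f mu - g mu|)
            | mu in [set: R]].

Definition beta (pi1 : seq nat -> nat -> R) (leader : bool) (n : nat)
  (ch : 'I_n.+1 -> game R) (p : seq nat) (i : 'I_n.+1) : \bar R :=
  if leader then -oo
  else \big[Order.max/-oo]_(j < n.+1 | j != i) (vgrim pi1 (ch j) (rcons p j))%:E.

Definition child_fun (U : seq nat -> R -> \bar R) (pi1 : seq nat -> nat -> R)
  (leader : bool) (n : nat) (ch : 'I_n.+1 -> game R) (p : seq nat)
  (i : 'I_n.+1) : R -> \bar R :=
  restrict (epf U (ch i) (rcons p i)) (beta pi1 leader n ch p i).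

Definition target (U : seq nat -> R -> \bar R) (pi1 : seq nat -> nat -> R)
  (g : game R) (p : seq nat) : R -> \bar R :=
  match g with
  | Leaf r1 r2 => leaf_epf r1 r2
  | Node l n ch => envelope n (child_fun U pi1 l n ch p)
  end.

Definition objective (U : seq nat -> R -> \bar R) (pi1 : seq nat -> nat -> R)
  (l : bool) (n : nat) (ch : 'I_n.+1 -> game R) (p : seq nat)
  (i j : 'I_n.+1) (t mu1 mu2 : R) : \bar R :=
  t%:E * child_fun U pi1 l n ch p i mu1
  + (1 - t)%:E * child_fun U pi1 l n ch p j mu2.

Definition feasible (n : nat) (mu : R) (c : nat * nat * R * R * R) : Prop :=
  let '(i, j, t, mu1, mu2) := c in
  [/\ (i < n.+1)%N, (j < n.+1)%N, (0 <= t <= 1)%R & (t * mu1 + (1 - t) * mu2 = mu)%R].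

Definition maximizer_choice (U : seq nat -> R -> \bar R)
  (pi1 : seq nat -> nat -> R) (g : game R)
  (c : seq nat -> R -> nat * nat * R * R * R) : Prop :=
  forall p l n ch mu, sub g p = Some (Node l n ch) ->
    feasible n mu (c p mu) /\
    let '(i, j, t, mu1, mu2) := c p mu in
    forall (i' j' : 'I_n.+1) (t' mu1' mu2' : R),
      (0 <= t' <= 1)%R -> (t' * mu1' + (1 - t') * mu2' = mu)%R ->
      objective U pi1 l n ch p i' j' t' mu1' mu2'
        <= objective U pi1 l n ch p (inord i) (inord j) t mu1 mu2.

(* Leader's expected payoff of the induced strategy from state g at path p *)
(* with promise mu (the follower follows recommendations).                 *)
Fixpoint induced_value (c : seq nat -> R -> nat * nat * R * R * R)
  (g : game R) (p : seq nat) (mu : R) : R :=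
  match g with
  | Leaf r1 _ => r1
  | Node _ n ch =>
    let '(i, j, t, mu1, mu2) := c p mu in
    (t * induced_value c (ch (inord i)) (rcons p i) mu1
     + (1 - t) * induced_value c (ch (inord j)) (rcons p j) mu2)%R
  end.

End Defs.

From mathcomp Require Import all_boot all_order all_algebra.
From mathcomp Require Import boolp classical_sets reals ereal.
From mathcomp Require Import ring lra.
Import Order.TTheory GRing.Theory Num.Theory.
Local Open Scope ring_scope.
Local Open Scope classical_set_scope.

(* At a state with promise [mu], the upper concave envelope of the restricted
   child EPFs is the best two-point mixture [t U_s'(mu') + (1 - t) U_s''(mu'')]
   with [t mu' + (1 - t) mu'' = mu], and this is exactly the mixture chosen by
   the induced strategy.  Hence the target EPF at [mu] is the mixture of the
   child EPF values at the promises passed down.  Since each learned EPF is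
   [eps]-close to its target, induction on the tree shows that the realised
   leader payoff from a state of depth [d] is within [d * eps] of its EPF at
   the promise: one [eps] per level, so the theorem holds with [C = 1]. *)

Section ConcaveEnvelope.
Context {R : realType}.
Local Open Scope ereal_scope.
Implicit Types (f h : R -> \bar R) (M : \bar R).

Lemma real_or_Ny (x : \bar R) : x != +oo -> x = -oo \/ exists r, x = r%:E.
Proof. by case: x => [r| |] // _; [right; exists r | left]. Qed.

(* [0 * -oo = 0] in [\bar R]: a zero weight hides an infinite value. *)
Lemma ecombinationE {t : R} {A B : \bar R} : (0 <= t <= 1)%R ->
  A != +oo -> B != +oo ->
  t%:E * A + (1 - t)%:E * B = -oo \/
  exists a b, [/\ t = 0%R \/ A = a%:E, t = 1%R \/ B = b%:E &
    t%:E * A + (1 - t)%:E * B = (t * a + (1 - t) * b)%R%:E].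
Proof.
move=> /andP[t0 t1] /real_or_Ny[->|[a ->]] /real_or_Ny[->|[b ->]].
- by left; case: (eqVneq t 0%R) => [->|tn0]; rewrite ?mul0e ?add0e;
    [rewrite subr0 mul1e | rewrite gt0_muleNy ?lte_fin ?lt0r ?tn0 // addNye].
- have [->|tn0] := eqVneq t 0%R; last first.
    by left; rewrite gt0_muleNy ?lte_fin ?lt0r ?tn0 // addNye.
  right; exists 0%R, b; split; [by left | by right |].
  by rewrite mul0e add0e !mul0r !add0r.
- have [->|tn1] := eqVneq t 1%R; last first.
    by left; rewrite gt0_muleNy ?lte_fin ?subr_gt0 ?lt_neqAle ?tn1 // addeNy.
  right; exists a, 0%R; split; [by right | by left |].
  by rewrite subrr mul0e adde0 !mul0r !addr0.
- by right; exists a, b; split; [right|right|rewrite -!EFinM -EFinD].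
Qed.

Lemma concave_e_cst M : concave_e R (fun=> M).
Proof.
move=> x y a b t /andP[t0 t1]; case: M => [m| |] ha hb.
- by move: ha hb; rewrite !lee_fin => ha hb; nra.
- exact: leey.
- by move: ha; rewrite leeNy_eq.
Qed.

Lemma concave_e_combination h (x y a b t : R) : concave_e R h ->
  (0 <= t <= 1)%R -> (t = 0%R \/ a%:E <= h x) -> (t = 1%R \/ b%:E <= h y) ->
  (t * a + (1 - t) * b)%R%:E <= h (t * x + (1 - t) * y)%R.
Proof.
move=> hc t01 [t0|ha] [t1|hb].
- by move: t1; rewrite t0 => /eqP; rewrite eq_sym oner_eq0.
- by rewrite t0 !mul0r !add0r !subr0 !mul1r.
- by rewrite t1 !mul1r subrr !mul0r !addr0.
- exact: hc.
Qed.

Lemma le_combination (t a b : R) M : (0 <= t <= 1)%R ->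
  (t = 0%R \/ a%:E <= M) -> (t = 1%R \/ b%:E <= M) ->
  (t * a + (1 - t) * b)%R%:E <= M.
Proof. exact: (@concave_e_combination _ 0%R 0%R _ _ _ (concave_e_cst M)). Qed.

Lemma concave_e_line (x0 y0 m : R) :
  concave_e R (fun z => (y0 + m * (z - x0))%R%:E).
Proof. by move=> x y a b t /andP[t0 t1]; rewrite !lee_fin => ha hb; nra. Qed.

Lemma concave_e_reflect h (c : R) :
  concave_e R h -> concave_e R (fun z => h (c - z)%R).
Proof.
move=> hc x y a b t t01 ha hb.
have -> : (c - (t * x + (1 - t) * y) = t * (c - x) + (1 - t) * (c - y))%R.
  by ring.
exact: hc.
Qed.

Definition ray (x0 : R) M : R -> \bar R :=
  fun z => if (z < x0)%R then -oo else if z == x0 then M else +oo.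

Lemma concave_e_ray (x0 : R) M : concave_e R (ray x0 M).
Proof.
have ray_ge (x a : R) :
    a%:E <= ray x0 M x -> (x0 <= x)%R /\ (x = x0 -> a%:E <= M).
  rewrite /ray; case: (ltgtP x x0) => [_|hx|->] // _.
  by split=> // ex; move: hx; rewrite ex ltxx.
move=> x y a b t t01 /ray_ge[hx ax] /ray_ge[hy ay].
move: (t01) => /andP[t0 t1].
rewrite /ray; case: ltgtP => [hz|_|hz]; [exfalso; nra | exact: leey |].
have ha : t = 0%R \/ a%:E <= M.
  have /eqP : (t * (x - x0) = 0)%R by nra.
  by rewrite mulf_eq0 subr_eq0 => /orP[/eqP|/eqP/ax]; [left|right].
have hb : t = 1%R \/ b%:E <= M.
  have /eqP : ((1 - t) * (y - x0) = 0)%R by nra.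
  by rewrite mulf_eq0 !subr_eq0 => /orP[/eqP <-|/eqP/ay]; [left|right].
exact: le_combination.
Qed.

Lemma envelope_le_majorant {n} {G : 'I_n.+1 -> R -> \bar R} {h} (mu : R) :
  concave_e R h -> (forall i z, G i z <= h z) -> envelope R n G mu <= h mu.
Proof.
move=> hc hG; apply: ereal_inf_lbound; exists h => //; split=> // z.
by apply/bigmax_leP; split=> [|i _]; [exact: leNye | exact: hG].
Qed.

Lemma combination_le_envelope n (G : 'I_n.+1 -> R -> \bar R) (i j : 'I_n.+1)
    (t x y : R) :
  (forall i z, G i z != +oo) -> (0 <= t <= 1)%R ->
  t%:E * G i x + (1 - t)%:E * G j y <=
  envelope R n G (t * x + (1 - t) * y)%R.
Proof.
move=> Gfin t01; apply: le_ereal_inf_tmp => _ [h [hc hG] <-].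
have Gh k z : G k z <= h z by apply: le_trans (hG z); exact: le_bigmax.
have [->|[a [b [ha hb ->]]]] := ecombinationE t01 (Gfin i x) (Gfin j y).
  exact: leNye.
apply: concave_e_combination => //.
- by case: ha => [|ea]; [left | right; rewrite -ea].
- by case: hb => [|eb]; [left | right; rewrite -eb].
Qed.

Section EnvelopeUpperBound.
Variables (n : nat) (G : 'I_n.+1 -> R -> \bar R) (mu : R) (M : \bar R).
Hypothesis G_neq_pinfty : forall i z, G i z != +oo.
Hypothesis combinations_le : forall (i j : 'I_n.+1) (t x y : R),
  (0 <= t <= 1)%R -> (t * x + (1 - t) * y = mu)%R ->
  t%:E * G i x + (1 - t)%:E * G j y <= M.

Lemma G_at_mu_le (i : 'I_n.+1) : G i mu <= M.
Proof.
have := combinations_le i i 1%R mu mu.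
rewrite ler01 lexx mul1r subrr mul0r addr0.
by rewrite mul1e mul0e adde0; apply.
Qed.

Lemma chord_le {i j : 'I_n.+1} {z1 z2 g1 g2 : R} :
  (z1 < mu)%R -> (mu < z2)%R -> G i z1 = g1%:E -> G j z2 = g2%:E ->
  ((g1 * (z2 - mu) + g2 * (mu - z1)) / (z2 - z1))%R%:E <= M.
Proof.
move=> h1 h2 e1 e2; have d0 : (0 < z2 - z1)%R by lra.
have := combinations_le i j ((z2 - mu) / (z2 - z1))%R z1 z2.
rewrite e1 e2 -!EFinM -EFinD.
have -> : ((z2 - mu) / (z2 - z1) * g1 + (1 - (z2 - mu) / (z2 - z1)) * g2
    = (g1 * (z2 - mu) + g2 * (mu - z1)) / (z2 - z1))%R.
  by field; rewrite gt_eqF.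
apply; last by field; rewrite gt_eqF.
by rewrite divr_ge0 ?ler_pdivrMr ?mul1r /=; lra.
Qed.

Let finite_left := exists i z, (z < mu)%R /\ G i z != -oo.
Let finite_right := exists i z, (mu < z)%R /\ G i z != -oo.

Lemma fin_of_neq_Ny i z : G i z != -oo -> exists g, G i z = g%:E.
Proof. by case/real_or_Ny: (G_neq_pinfty i z) => [->|] //; rewrite eqxx. Qed.

Lemma slope_right_le_left {i j : 'I_n.+1} {z1 z2 g1 g2 Mr : R} :
  (z1 < mu)%R -> (mu < z2)%R -> G i z1 = g1%:E -> G j z2 = g2%:E ->
  M = Mr%:E -> ((g2 - Mr) / (z2 - mu) <= (Mr - g1) / (mu - z1))%R.
Proof.
move=> h1 h2 e1 e2 eM; have := chord_le h1 h2 e1 e2; rewrite eM lee_fin.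
have d1 : (0 < mu - z1)%R by rewrite subr_gt0.
have d2 : (0 < z2 - mu)%R by rewrite subr_gt0.
have d0 : (0 < z2 - z1)%R by lra.
rewrite ler_pdivrMr // => H; rewrite ler_pdivrMr // mulrAC ler_pdivlMr //; nra.
Qed.

Lemma line_majorant : finite_left -> finite_right -> M != +oo ->
  exists2 h, concave_e R h & (forall i z, G i z <= h z) /\ h mu <= M.
Proof.
move=> [i1 [z1 [hz1 /fin_of_neq_Ny[g1 e1]]]].
move=> [i2 [z2 [hz2 /fin_of_neq_Ny[g2 e2]]]] /real_or_Ny[Mny|[Mr eM]].
  by have := chord_le hz1 hz2 e1 e2; rewrite Mny leeNy_eq.
pose slopes := [set s | exists i z g,
  [/\ (mu < z)%R, G i z = g%:E & s = ((g - Mr) / (z - mu))%R]].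
have slopes_ub i z g : (z < mu)%R -> G i z = g%:E ->
    ubound slopes ((Mr - g) / (mu - z))%R.
  move=> hz e _ [j [z' [g' [hz' e' ->]]]].
  exact: slope_right_le_left e e' eM.
have slopes0 : slopes !=set0 by exists ((g2 - Mr) / (z2 - mu))%R, i2, z2, g2.
have slopes_sup : has_sup slopes.
  by split=> //; exists ((Mr - g1) / (mu - z1))%R; exact: slopes_ub e1.
exists (fun z => (Mr + sup slopes * (z - mu))%R%:E).
  exact: concave_e_line.
split; last by rewrite subrr mulr0 addr0 eM.
move=> i z; case/real_or_Ny: (G_neq_pinfty i z) => [->|[g eg]].
  exact: leNye.
rewrite eg lee_fin; case: (ltgtP z mu) => hz.
- have : (sup slopes <= (Mr - g) / (mu - z))%R.
    by apply: ge_sup => //; exact: slopes_ub eg.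
  by rewrite ler_pdivlMr ?subr_gt0 // => H; nra.
- have : ((g - Mr) / (z - mu) <= sup slopes)%R.
    by apply: sup_upper_bound => //; exists i, z, g.
  by rewrite ler_pdivrMr ?subr_gt0 // => H; nra.
- by have := G_at_mu_le i; rewrite -hz eg eM lee_fin subrr mulr0 addr0.
Qed.

Lemma ray_majorant : ~ finite_left -> forall i z, G i z <= ray mu M z.
Proof.
move=> noleft i z; rewrite /ray; case: (ltgtP z mu) => [hz|_|->].
- by rewrite leeNy_eq; apply/negPn/negP => hG; apply: noleft; exists i, z.
- exact: leey.
- exact: G_at_mu_le.
Qed.

Lemma reflected_ray_majorant :
  ~ finite_right -> forall i z, G i z <= ray mu M (mu + mu - z)%R.
Proof.
move=> noright i z; rewrite /ray; case: (ltgtP z mu) => [hz|hz|->].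
- have hz' : (mu < mu + mu - z)%R by lra.
  by rewrite lt_gtF // gt_eqF // leey.
- rewrite ifT; last by lra.
  by rewrite leeNy_eq; apply/negPn/negP => hG; apply: noright; exists i, z.
- by rewrite addrK ltxx eqxx; exact: G_at_mu_le.
Qed.

(* The envelope at [mu] is capped by [M] through an explicit concave majorant:
   a supporting line through [(mu, M)] when some [G i] is finite on both sides
   of [mu], a vertical ray at [mu] otherwise. *)
Lemma envelope_le : envelope R n G mu <= M.
Proof.
have [->|Mfin] := eqVneq M +oo; first exact: leey.
have [[left right]|] := pselect (finite_left /\ finite_right).
  have [h hc [hG hmu]] := line_majorant left right Mfin.
  exact: le_trans (envelope_le_majorant mu hc hG) hmu.
move=> /not_andP[noleft|noright].
  have := envelope_le_majorant mu (concave_e_ray mu M) (ray_majorant noleft).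
  by rewrite /ray ltxx eqxx.
have := envelope_le_majorant mu
  (concave_e_reflect _ (mu + mu)%R (concave_e_ray mu M))
  (reflected_ray_majorant noright).
by rewrite addrK /ray ltxx eqxx.
Qed.

End EnvelopeUpperBound.

Lemma abse_sub_le_Linf f h (mu : R) :
  f mu != -oo -> `|f mu - h mu| <= Linf R f h.
Proof.
by move=> fmu; apply: ereal_sup_ubound; exists mu => //; rewrite (negbTE fmu).
Qed.

Lemma ereal_sup_range_attained {T : Type} {f : T -> \bar R} {x : T} :
  (forall y, f y <= f x) -> ereal_sup (range f) = f x.
Proof.
move=> fx; apply/le_anti/andP; split; last by apply: ereal_sup_ubound; exists x.
by apply: ge_ereal_sup => _ [y _ <-]; exact: fx.
Qed.

End ConcaveEnvelope.

Lemma dist_combination_le (R : realType) (t x1 x2 a b K : R) : 0 <= t <= 1 ->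
  (t = 0 \/ `|x1 - a| <= K) -> (t = 1 \/ `|x2 - b| <= K) ->
  `|t * x1 + (1 - t) * x2 - (t * a + (1 - t) * b)| <= K.
Proof.
move=> t01 h1 h2; move: (t01) => /andP[t0 t1].
have t'0 : 0 <= 1 - t by rewrite subr_ge0.
have := @le_combination R t `|x1 - a| `|x2 - b| K%:E t01.
rewrite !lee_fin => /(_ h1 h2); apply: le_trans.
have -> : t * x1 + (1 - t) * x2 - (t * a + (1 - t) * b)
    = t * (x1 - a) + (1 - t) * (x2 - b) by ring.
apply: le_trans (ler_normD _ _) _.
by rewrite !normrM (ger0_norm t0) (ger0_norm t'0).
Qed.

Lemma bracket_index (R : realType) (x : nat -> R) (m : nat) (mu : R) :
  x 0%N <= mu -> mu <= x m.+1 -> exists2 i, (i <= m)%N & x i <= mu <= x i.+1.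
Proof.
move=> h0; elim: m => [|m IH] hm; first by exists 0%N; rewrite ?h0.
have [/IH[i hi hx]|/ltW hlt] := leP mu (x m.+1).
  by exists i => //; exact: leqW.
by exists m.+1; rewrite ?hlt.
Qed.

Lemma pl_interp_neq_pinfty {R : realType} {f : R -> \bar R} {a b : R} :
  pl_interp R f a b -> forall mu, (f mu != +oo)%E.
Proof.
move=> [m [x [y [x0 xm _ fa [seg out]]]]] mu.
have [/andP[h1 h2]|/out -> //] := pselect (a <= mu <= b).
case: m xm seg => [|m] xm seg.
  have -> : mu = a by apply/eqP; rewrite eq_le h1 -x0 xm h2.
  by rewrite fa.
have [i hi hx] : exists2 i, (i <= m)%N & x i <= mu <= x i.+1.
  by apply: bracket_index; rewrite ?x0 ?xm.
by rewrite (seg i).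
Qed.

Section InducedValue.
Context {R : realType} {g : game R} { pi1 pia : seq nat -> nat -> R }.
Context {U : seq nat -> R -> \bar R}.
Context {c : seq nat -> R -> nat * nat * R * R * R}.
Context {eps : R}.

Hypothesis U_pl : forall {p l n ch}, sub g p = Some (Node l n ch) ->
  pl_interp R (U p) (vgrim R pi1 (Node l n ch) p) (valt R pia (Node l n ch) p).
Hypothesis U_near_target : forall {p s}, sub g p = Some s ->
  (Linf R (epf R U s p) (target R U pi1 s p) <= eps%:E)%E.
Hypothesis c_maximizer : maximizer_choice R U pi1 g c.

Lemma sub_nil : sub g [::] = Some g.
Proof. by case: g. Qed.

Lemma sub_rcons (s : game R) p i :
  sub s (rcons p i) = obind (fun s' => sub s' [:: i]) (sub s p).
Proof.
elim: p s => [|k p IH] [r1 r2|l n ch] //=; case: ifP => // _; exact: IH.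
Qed.

Lemma sub_child {s : game R} {p l n ch} (i : 'I_n.+1) :
  sub s p = Some (Node l n ch) -> sub s (rcons p i) = Some (ch i).
Proof.
by move=> hp; rewrite sub_rcons hp /= ltn_ord inord_val; case: (ch i).
Qed.

Lemma epf_neq_pinfty {p s} :
  sub g p = Some s -> forall z, (epf R U s p z != +oo)%E.
Proof.
case: s => [r1 r2|l n ch] hp z; first by rewrite /= /leaf_epf; case: ifP.
exact: pl_interp_neq_pinfty (U_pl hp) z.
Qed.

Lemma epf_max_fin {p s mu} : sub g p = Some s ->
  (forall z, epf R U s p z <= epf R U s p mu)%E ->
  exists v, epf R U s p mu = v%:E.
Proof.
move=> hp hmax; case/real_or_Ny: (epf_neq_pinfty hp mu) => // eNy; exfalso.
move: hmax hp eNy; case: s => [r1 r2|l n ch] hmax hp eNy.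
  by have := hmax r2; rewrite eNy leeNy_eq /= /leaf_epf eqxx.
have [m [x [y [_ _ _ fa _]]]] := U_pl hp.
by have := hmax (vgrim R pi1 (Node l n ch) p); rewrite eNy leeNy_eq /= fa.
Qed.

Lemma child_fun_neq_pinfty {p l n ch} : sub g p = Some (Node l n ch) ->
  forall i z, (child_fun R U pi1 l n ch p i z != +oo)%E.
Proof.
move=> hp i z; rewrite /child_fun /restrict; case: ifP => // _.
exact: epf_neq_pinfty (sub_child i hp) z.
Qed.

Lemma target_at_choice {p l n ch mu i j t mu1 mu2} :
  sub g p = Some (Node l n ch) -> c p mu = (i, j, t, mu1, mu2) ->
  target R U pi1 (Node l n ch) p mu =
  objective R U pi1 l n ch p (inord i) (inord j) t mu1 mu2.
Proof.
move=> hp E; have := c_maximizer p l n ch mu hp.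
rewrite E => -[[_ _ t01 hmu] hmax]; apply/le_anti/andP; split.
  by apply: envelope_le; [exact: child_fun_neq_pinfty | exact: hmax].
rewrite -hmu; apply: combination_le_envelope => //.
exact: child_fun_neq_pinfty.
Qed.

Lemma induced_value_near_epf {s p} : sub g p = Some s ->
  forall mu v, epf R U s p mu = v%:E ->
  `|induced_value R c s p mu - v| <= (depth s)%:R * eps.
Proof.
elim: s p => [r1 r2|l n ch IH] p hp mu v hv.
  move: hv; rewrite /= /leaf_epf; case: ifP => // _ [<-].
  by rewrite subrr normr0 mul0r.
have hLe : (`|v%:E - target R U pi1 (Node l n ch) p mu| <= eps%:E)%E.
  rewrite -hv; apply: le_trans (U_near_target hp).
  by apply: abse_sub_le_Linf; rewrite hv.
have eps0 : 0 <= eps.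
  by rewrite -lee_fin; apply: le_trans hLe; exact: abse_ge0.
rewrite /=; case E: (c p mu) => [[[[i j] t] mu1] mu2].
have := c_maximizer p l n ch mu hp; rewrite E => -[[hi hj t01 _] _].
rewrite (target_at_choice hp E) /objective in hLe.
have [eNy|[a [b [ha hb eab]]]] := ecombinationE t01
  (child_fun_neq_pinfty hp (inord i) mu1)
  (child_fun_neq_pinfty hp (inord j) mu2).
  by move: hLe; rewrite eNy.
move: hLe; rewrite eab -EFinB abse_EFin lee_fin distrC => hvm.
set D := (\max_(k < n.+1) depth (ch k))%N.
have IHk (k : nat) mu' a' : (k < n.+1)%N ->
    child_fun R U pi1 l n ch p (inord k) mu' = a'%:E ->
    `|induced_value R c (ch (inord k)) (rcons p k) mu' - a'| <= D%:R * eps.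
  move=> hk; rewrite /child_fun /restrict; case: ifP => // _ ea.
  have := IH (inord k) _ (sub_child (inord k) hp) _ _ ea; rewrite inordK //.
  move/le_trans; apply; apply: ler_wpM2r => //; rewrite ler_nat.
  exact: (@leq_bigmax _ (fun k0 => depth (ch k0))).
have -> : D.+1%:R * eps = D%:R * eps + eps.
  by rewrite -addn1 natrD mulrDl mul1r.
apply: le_trans (ler_distD (t * a + (1 - t) * b) _ _) _.
apply: lerD hvm; apply: dist_combination_le => //.
- by case: ha => [|ea]; [left | right; exact: IHk ea].
- by case: hb => [|eb]; [left | right; exact: IHk eb].
Qed.

End InducedValue.

Theorem theorem4 :
  exists C : nat, forall (R : realType) (g : game R)
    (pi1 pia : seq nat -> nat -> R) (U : seq nat -> R -> \bar R)
    (c : seq nat -> R -> nat * nat * R * R * R) (mu_root eps : R),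
    is_strategy R true pi1 g ->
    is_strategy R false pia g ->
    (forall p s, sub g p = Some s -> vgrim R pi1 s p <= valt R pia s p) ->
    (forall p l n ch, sub g p = Some (Node l n ch) ->
       pl_interp R (U p) (vgrim R pi1 (Node l n ch) p)
                         (valt R pia (Node l n ch) p)) ->
    (forall p s, sub g p = Some s ->
       (Linf R (epf R U s p) (target R U pi1 s p) <= eps%:E)%E) ->
    maximizer_choice R U pi1 g c ->
    (forall mu, (epf R U g [::] mu <= epf R U g [::] mu_root)%E) ->
    (`| (induced_value R c g [::] mu_root)%:E
        - ereal_sup (range (epf R U g [::])) |
       <= (C%:R * (depth g)%:R * eps)%:E)%E.
Proof.
exists 1%N => R g pi1 pia U c mu_root eps _ _ _ U_pl U_near c_max root_max.
rewrite (ereal_sup_range_attained root_max) mul1r.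
have [v ev] := epf_max_fin U_pl sub_nil root_max.
rewrite ev -EFinB abse_EFin lee_fin.
exact: (induced_value_near_epf U_pl U_near c_max sub_nil mu_root v ev).
Qed.
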